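(* Let $d\ge3$, $h\ge1$. The exponent $\exp(d,h)$ of $G(d,h)$ divides $$(d-1)^h\cdot\operatorname{lcm}\{d\,\theta(d,h+1),\ \theta(d,h),\ \theta(d,h-1),\dots,\theta(d,2)\},$$ where $\theta(d,n):=\frac{(d-1)^n-1}{d-2}$.
   Context: Let $\mathcal{T}(d,h)$ be the rooted tree in which the root $0$ has $d$ children, every vertex at distance $1,\dots,h-1$ from the root has $d-1$ children, and the vertices at distance $h$ are leaves. Let $V$ be its vertex set, $A$ its adjacency matrix, $\Delta := dI-A$, and $\Lambda\subset\mathbb{Z}^V$ the lattice spanned by the rows of $\Delta$. Then $G(d,h):=\mathbb{Z}^V/\Lambda$. The exponent is the least common multiple of the orders of the elements. *)

From HB Require Import structures.
From mathcomp Require Import all_boot all_order all_algebra.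
Set Implicit Arguments. Unset Strict Implicit. Unset Printing Implicit Defensive.
Import Order.TTheory GRing.Theory Num.Theory.

(* Raw vertices of T(d,h): a depth k <= h together with a path of k child
   indices (the vertex reached from the root 0 by following these choices). *)
Definition vraw (d h : nat) := {k : 'I_h.+1 & k.-tuple 'I_d}.
Definition vseq d h (x : vraw d h) : seq 'I_d := tagged x.

(* The root has d children (first index < d); every other internal vertex has
   d-1 children (later indices < d-1). *)
Definition vvalid d h (x : vraw d h) : bool :=
  all (fun i : 'I_d => (i < d.-1)%N) (behead (vseq x)).

Definition vert (d h : nat) := {x : vraw d h | vvalid x}.

Definition vpath d h (u : vert d h) : seq 'I_d := vseq (val u).

Definition is_child d h (u v : vert d h) : bool :=
  (size (vpath v) == (size (vpath u)).+1)
  && (take (size (vpath u)) (vpath v) == vpath u).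

Definition adj d h (u v : vert d h) : bool := is_child u v || is_child v u.

Local Open Scope ring_scope.

Definition Delta d h (u w : vert d h) : int :=
  (if u == w then (d%:Z) else 0) - (if adj u w then 1 else 0).

Definition in_lattice d h (x : vert d h -> int) : Prop :=
  exists c : vert d h -> int, forall w, x w = \sum_(u : vert d h) c u * Delta u w.

Definition nscale d h (n : nat) (x : vert d h -> int) : vert d h -> int :=
  fun w => n%:Z * x w.

(* n is the order of the class of x in G(d,h) = Z^V / Lambda
   (n = 0 encodes infinite order). *)
Definition is_order d h (x : vert d h -> int) (n : nat) : Prop :=
  ((0 < n)%N /\ in_lattice (nscale n x) /\
     forall m : nat, (0 < m)%N -> in_lattice (nscale m x) -> (n <= m)%N)
  \/ (n = 0%N /\ forall m : nat, (0 < m)%N -> ~ in_lattice (nscale m x)).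

Definition is_exponent d h (e : nat) : Prop :=
  (forall (x : vert d h -> int) n, is_order x n -> (n %| e)%N) /\
  (forall m : nat, (forall (x : vert d h -> int) n, is_order x n -> (n %| m)%N) ->
     (e %| m)%N).

Local Close Scope ring_scope.

(* theta(d,n) = ((d-1)^n - 1)/(d-2)  (exact division for d >= 3) *)
Definition theta (d n : nat) : nat := ((d.-1) ^ n - 1) %/ (d - 2).

Definition exp_bound (d h : nat) : nat :=
  (d.-1) ^ h * lcmn (d * theta d h.+1) (\big[lcmn/1%N]_(2 <= k < h.+1) theta d k).

(* Let M := exp_bound d h. It suffices to show that M * e_v lies in the lattice for every
   vertex v, i.e. to write down an integer vector c_v with c_v Delta = M e_v (M times the
   Green function of Delta at v). Let t be the depth of v and T(n) := theta(d, h+1-n), so that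
   T(n) = (d-1) T(n+1) + 1 and T(h+1) = 0. Take c_v(u) := B(m) T(n), where n is the depth
   of u and m the depth at which the path from the root to u leaves the path to v. Away from
   that path, (c_v Delta)(u) = B(m) (d T(n) - T(n-1) - (d-1) T(n+1)) = 0. Along it, the
   equations determine B, and after substituting the recurrence for T they reduce to the
   identities (M / T(n)) T(n) = M; the divisibility of M by theta(d,a) for 1 <= a <= h+1 and
   by d (d-1)^h theta(d,h+1) is exactly what makes B integral. *)

From mathcomp Require Import all_boot all_order all_algebra.
From mathcomp Require Import zify ring.

Set Implicit Arguments.
Unset Strict Implicit.
Unset Printing Implicit Defensive.

Import Order.TTheory GRing.Theory Num.Theory.

Lemma theta0 d : theta d 0 = 0.
Proof. by rewrite /theta subnn div0n. Qed.

Section Theta.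
Variable d : nat.
Hypothesis d_gt2 : 2 < d.

Lemma thetaE n : theta d n = \sum_(i < n) d.-1 ^ i.
Proof.
rewrite /theta subn1 predn_exp (_ : d.-1.-1 = d - 2); last by lia.
by rewrite mulKn //; lia.
Qed.

Lemma thetaS n : theta d n.+1 = d.-1 * theta d n + 1.
Proof.
rewrite !thetaE big_ord_recl expn0 big_distrr addnC.
by congr (_ + _); apply: eq_bigr => i _; rewrite expnS.
Qed.

Lemma theta1 : theta d 1 = 1.
Proof. by rewrite thetaS theta0 muln0. Qed.

Lemma theta_gt0 n : 0 < n -> 0 < theta d n.
Proof. by case: n => // n _; rewrite thetaS addn1. Qed.

Lemma expn_theta n : d.-1 ^ n = (d - 2) * theta d n + 1.
Proof.
elim: n => [|n IHn]; first by rewrite theta0 muln0.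
rewrite thetaS expnS IHn !mulnDr !muln1 mulnCA -addnA; congr (_ + _); lia.
Qed.

End Theta.

Local Open Scope ring_scope.

Lemma in_lattice_scale d h M (c : vert d h -> vert d h -> int) :
  (forall v w, \sum_u c v u * Delta u w = if w == v then M%:Z else 0) ->
  forall x : vert d h -> int, in_lattice (nscale M x).
Proof.
move=> cP x; exists (fun u => \sum_v x v * c v u) => w.
under eq_bigr => u _ do rewrite mulr_suml.
rewrite exchange_big /=.
under eq_bigr => v _ do (under eq_bigr => u _ do rewrite -mulrA; rewrite -mulr_sumr cP).
rewrite (bigD1 w) //= eqxx big1 ?addr0 1?mulrC // => v ne_vw.
by rewrite eq_sym (negbTE ne_vw) mulr0.
Qed.

Lemma in_lattice_modn d h (x : vert d h -> int) m n :
  in_lattice (nscale m x) -> in_lattice (nscale n x) -> in_lattice (nscale (m %% n) x).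
Proof.
move=> [cm cmP] [cn cnP]; exists (fun u => cm u - (m %/ n)%:Z * cn u) => w.
under eq_bigr => u _ do rewrite mulrBl -mulrA.
rewrite sumrB -mulr_sumr -cmP -cnP /nscale.
by have /(congr1 Posz) := divn_eq m n; rewrite PoszD PoszM => {1}->; ring.
Qed.

Lemma exponent_dvdn d h e M : is_exponent d h e -> (0 < M)%N ->
  (forall x : vert d h -> int, in_lattice (nscale M x)) -> (e %| M)%N.
Proof.
move=> [_ e_min] M_gt0 latM; apply: e_min => x n [[n_gt0 [lat_n n_min]] | [_ no_order]].
  case: (posnP (M %% n)) => [/eqP // | r_gt0].
  by have := n_min _ r_gt0 (in_lattice_modn (latM x) lat_n); rewrite leqNgt ltn_mod n_gt0.
by case: (no_order M M_gt0).
Qed.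

Section TreePaths.
Variables d h : nat.

Definition is_vpath (s : seq 'I_d) : bool :=
  (size s <= h)%N && all (fun i : 'I_d => (i < d.-1)%N) (behead s).

Lemma vpathP (u : vert d h) : is_vpath (vpath u).
Proof.
by case: u => [[k s] /= valid_s]; rewrite /is_vpath /vpath /vseq /= size_tuple -ltnS ltn_ord.
Qed.

Lemma vpath_inj : injective (@vpath d h).
Proof.
move=> [[k1 s1] valid1] [[k2 s2] valid2]; rewrite /vpath /vseq /= => eq_s.
have eq_k : k1 = k2 by apply: val_inj; rewrite /= -(size_tuple s1) -(size_tuple s2) eq_s.
subst k2; have eq_t : s1 = s2 by apply: val_inj.
by subst s2; congr exist; apply: bool_irrelevance.
Qed.

Lemma vpath_onto s : is_vpath s -> exists u : vert d h, vpath u = s.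
Proof.
case/andP=> size_s valid_s.
by exists (exist _ (Tagged (fun k : 'I_h.+1 => k.-tuple 'I_d)
                   (in_tuple s : (Ordinal (size_s : size s < h.+1)%N).-tuple _)) valid_s).
Qed.

Lemma sum_vpath_eq (F : seq 'I_d -> int) s :
  \sum_(u : vert d h | vpath u == s) F (vpath u) = if is_vpath s then F s else 0.
Proof.
case: ifP => [/vpath_onto[u0 <-] | not_vpath_s].
  by rewrite (big_pred1 u0) // => u; apply/eqP/eqP => [/vpath_inj | ->].
by rewrite big_pred0 // => u; apply/eqP => us; move: (vpathP u); rewrite us not_vpath_s.
Qed.

Lemma is_vpath_rcons s i : is_vpath (rcons s i) =
  [&& (size s < h)%N, all (fun i : 'I_d => (i < d.-1)%N) (behead s)
    & (s == [::]) || (i < d.-1)%N].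
Proof.
rewrite /is_vpath size_rcons; case: s => [|x s] //=.
by rewrite all_rcons (andbC (i < d.-1)%N).
Qed.

Lemma is_vpath_catl s1 s2 : is_vpath (s1 ++ s2) -> is_vpath s1.
Proof.
rewrite /is_vpath size_cat; case: s1 => [|x s1] /=; first by [].
by rewrite all_cat => /and3P[le_sh -> _]; rewrite andbT (leq_trans _ le_sh) ?leq_addr.
Qed.

Lemma is_child_rcons (u w : vert d h) p i : vpath w = rcons p i ->
  is_child u w = (vpath u == p).
Proof.
move=> eq_w; rewrite /is_child eq_w size_rcons eqSS.
case: eqP => [<- | ne_size] /=; first by rewrite -cats1 take_size_cat.
by apply/esym/eqP => eq_u; case: ne_size; rewrite eq_u.
Qed.

Lemma is_childE (u w : vert d h) :
  is_child w u = [exists i : 'I_d, vpath u == rcons (vpath w) i].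
Proof.
rewrite /is_child; apply/andP/existsP => [[/eqP size_u /eqP take_u] | [i /eqP ->]].
  case/lastP: (vpath u) size_u take_u => [|p j] // /eqP; rewrite size_rcons eqSS => /eqP <-.
  by rewrite -cats1 take_size_cat // => <-; exists j; rewrite cats1.
by rewrite size_rcons -cats1 take_size_cat.
Qed.

Lemma sum_adj (F : vert d h -> int) w :
  \sum_(u | adj u w) F u = \sum_(u | is_child u w) F u + \sum_(u | is_child w u) F u.
Proof.
rewrite (bigID (fun u => is_child u w)) /=; congr (_ + _); apply: eq_bigl => u.
  by rewrite /adj; case: (is_child u w); rewrite ?andbF.
rewrite /adj; case: (boolP (is_child u w)) => [uw | _]; last by rewrite andbT.
rewrite andbF; apply/esym/negP; move: uw; rewrite /is_child => /andP[/eqP sz _].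
by case/andP => /eqP; rewrite sz; lia.
Qed.

Lemma sum_parent (F : seq 'I_d -> int) (w : vert d h) p i : vpath w = rcons p i ->
  \sum_(u | is_child u w) F (vpath u) = F p.
Proof.
move=> eq_w; rewrite (eq_bigl _ _ (fun u => is_child_rcons u eq_w)) sum_vpath_eq.
by move: (vpathP w); rewrite eq_w -cats1 => /is_vpath_catl ->.
Qed.

Lemma sum_parent_root (F : vert d h -> int) (w : vert d h) : vpath w = [::] ->
  \sum_(u | is_child u w) F u = 0.
Proof. by move=> eq_w; rewrite big_pred0 // => u; rewrite /is_child eq_w. Qed.

Lemma sum_children (F : seq 'I_d -> int) (w : vert d h) :
  \sum_(u | is_child w u) F (vpath u)
  = \sum_(i : 'I_d) (if is_vpath (rcons (vpath w) i) then F (rcons (vpath w) i) else 0).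
Proof.
under [RHS]eq_bigr => i _ do rewrite -(sum_vpath_eq F) big_mkcond.
rewrite exchange_big big_mkcond; apply: eq_bigr => u _ /=.
rewrite is_childE; case: existsP => [[j /eqP eq_u] | no_i].
  rewrite (bigD1 j) //= eq_u eqxx big1 ?addr0 // => k ne_kj.
  by rewrite eqseq_rcons eqxx /= eq_sym (negbTE ne_kj).
by rewrite big1 // => k _; case: eqP => // eq_u; case: no_i; exists k; apply/eqP.
Qed.

Lemma sum_children_const (a : int) s : (size s < h)%N -> is_vpath s ->
  \sum_(i : 'I_d) (if is_vpath (rcons s i) then a else 0)
  = (if s == [::] then d else d.-1)%:Z * a.
Proof.
move=> lt_sh /andP[_ all_s]; under eq_bigr => i _ do rewrite is_vpath_rcons lt_sh all_s /=.
case: (s == [::]) => /=; first by rewrite sumr_const card_ord -mulr_natl natz.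
by rewrite -big_mkcond (big_ord_narrow (leq_pred d)) sumr_const card_ord -mulr_natl natz.
Qed.

End TreePaths.

Lemma sum_Delta d h (c : vert d h -> int) (w : vert d h) :
  \sum_u c u * Delta u w = d%:Z * c w - \sum_(u | adj u w) c u.
Proof.
rewrite /Delta (eq_bigr (fun u => (if u == w then c u * d%:Z else 0)
                                  - (if adj u w then c u else 0))) => [|u _].
  by rewrite sumrB -!big_mkcond big_pred1_eq mulrC.
by rewrite mulrBr; case: (u == w); case: (adj u w); rewrite ?mulr0 ?mulr1.
Qed.

Section LongestCommonPrefix.
Variable T : eqType.

Fixpoint lcp (s1 s2 : seq T) : nat :=
  if s1 is x1 :: s1' then
    if s2 is x2 :: s2' then (if x1 == x2 then (lcp s1' s2').+1 else 0) else 0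
  else 0.

Lemma lcp_size s1 s2 : (lcp s1 s2 <= size s1)%N.
Proof. by elim: s1 s2 => [|x1 s1 IHs] [|x2 s2] //=; case: eqP => // _; apply: IHs. Qed.

Lemma eq_lcp s1 s2 : (s1 == s2) = (lcp s1 s2 == size s1) && (size s1 == size s2).
Proof.
elim: s1 s2 => [|x1 s1 IHs] [|x2 s2] //=.
by rewrite eqseq_cons; case: (x1 == x2); rewrite //= !eqSS IHs.
Qed.

Lemma lcp_prefix s1 s2 : lcp s1 s2 = size s1 -> take (size s1) s2 = s1.
Proof.
elim: s1 s2 => [|x1 s1 IHs] [|x2 s2] //=.
by case: eqP => // -> [/IHs ->].
Qed.

Lemma lcp_rcons s1 s2 x : lcp (rcons s1 x) s2 =
  if [&& lcp s1 s2 == size s1, (size s1 < size s2)%N & x == nth x s2 (size s1)]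
  then (size s1).+1 else lcp s1 s2.
Proof.
elim: s1 s2 => [|x1 s1 IHs] [|x2 s2] //=.
by case: (x1 == x2); rewrite //= IHs eqSS ltnS; case: ifP.
Qed.

End LongestCommonPrefix.

Section Radial.
Variables d h M : nat.
Hypothesis d_gt2 : (2 < d)%N.

Lemma natz_pred : d%:Z = (d.-1)%:Z + 1.
Proof. by rewrite -PoszD addn1 prednK //; lia. Qed.

Definition radial n : int := theta d (h.+1 - n).

Lemma radialS n : (n <= h)%N -> radial n = (d.-1)%:Z * radial n.+1 + 1.
Proof.
by move=> le_nh; rewrite /radial (_ : h.+1 - n = (h.+1 - n.+1).+1)%N ?thetaS //; lia.
Qed.

Lemma radial_leaf : radial h.+1 = 0.
Proof. by rewrite /radial subnn theta0. Qed.

Lemma radial_harmonic n : (0 < n <= h)%N ->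
  d%:Z * radial n - radial n.-1 - (d.-1)%:Z * radial n.+1 = 0.
Proof.
case: n => // n /= lt_nh.
by rewrite (radialS (ltnW lt_nh)) (radialS lt_nh) natz_pred; ring.
Qed.

Lemma radial0B1 : radial 0 - radial 1 = (d.-1)%:Z ^+ h.
Proof.
rewrite (radialS (leq0n h)) /radial subSS subn0 -natz -natrX natz expn_theta //.
rewrite (_ : d.-1 = (d - 2) + 1)%N; last by lia.
by rewrite !PoszD; ring.
Qed.

Hypothesis theta_dvdM : forall a, (0 < a <= h.+1)%N -> (theta d a %| M)%N.
Hypothesis root_dvdM : (d * d.-1 ^ h * theta d h.+1 %| M)%N.

Definition radial_quot n : int := (M %/ theta d (h.+1 - n))%N.
Definition root_quot : int := (M %/ (d * d.-1 ^ h * theta d h.+1))%N.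

Lemma radial_quotK n : (n <= h)%N -> radial_quot n * radial n = M%:Z.
Proof. by move=> le_nh; rewrite -PoszM divnK //; apply: theta_dvdM; lia. Qed.

Lemma root_quotE : root_quot * (d%:Z * (d.-1)%:Z ^+ h) = radial_quot 0.
Proof.
rewrite /root_quot /radial_quot subn0 -[(d.-1)%:Z]natz -natrX natz -!PoszM; congr Posz.
have dvd_quot : (d * d.-1 ^ h %| M %/ theta d h.+1)%N.
  by rewrite dvdn_divRL //; apply: theta_dvdM; rewrite /=.
by rewrite [(d * _ * _)%N]mulnC divnMA divnK.
Qed.

Variable t : nat.
Hypothesis t_le_h : (t <= h)%N.

(* The increments of [branch] are forced by the equations at the vertices of the path from
   the root to the target vertex (of depth [t]); [root_quot] fixes the scale so that the
   equation at the target vertex yields [M]. *)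
Definition branch m : int :=
  radial t * (root_quot + \sum_(j < m) (radial_quot j.+1 - (d.-1)%:Z * radial_quot j)).

Definition green m n : int := branch m * radial n.

Lemma branchS m :
  branch m.+1 = branch m + radial t * (radial_quot m.+1 - (d.-1)%:Z * radial_quot m).
Proof. by rewrite /branch big_ord_recr /=; ring. Qed.

Lemma green_spine_root :
  d%:Z * green 0 0 - d%:Z * green 0 1 - (if (0 < t)%N then green 1 1 - green 0 1 else 0)
  = if t == 0%N then M%:Z else 0.
Proof.
have branch0 : branch 0 = radial t * root_quot by rewrite /branch big_ord0 addr0.
case: (posnP t) => [t0 | t_gt0] /=.
  by rewrite /green branch0 t0 -(radial_quotK (leq0n h)) -root_quotE -radial0B1; ring.
have -> : d%:Z * green 0 0 - d%:Z * green 0 1 - (green 1 1 - green 0 1) =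
    radial t * (root_quot * (d%:Z * (d.-1)%:Z ^+ h)
                - (radial_quot 1 - (d.-1)%:Z * radial_quot 0) * radial 1).
  by rewrite /green branchS branch0 -radial0B1; ring.
rewrite root_quotE.
have -> : radial_quot 0 - (radial_quot 1 - (d.-1)%:Z * radial_quot 0) * radial 1
    = radial_quot 0 * radial 0 - radial_quot 1 * radial 1.
  by rewrite (radialS (leq0n h)); ring.
by rewrite !radial_quotK ?subrr ?mulr0 //; lia.
Qed.

Lemma green_spine n : (0 < n <= t)%N ->
  d%:Z * green n n - green n.-1 n.-1 - (d.-1)%:Z * green n n.+1
  - (if (n < t)%N then green n.+1 n.+1 - green n n.+1 else 0)
  = if n == t then M%:Z else 0.
Proof.
case: n => // k /= le_kt; have lt_kh : (k < h)%N by lia.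
case: (ltngtP k.+1 t) => [lt_kt | gt_kt | eq_kt]; [ | lia | ].
  have -> : d%:Z * green k.+1 k.+1 - green k k - (d.-1)%:Z * green k.+1 k.+2
        - (green k.+2 k.+2 - green k.+1 k.+2)
      = radial t * (d%:Z * (radial_quot k.+1 * radial k.+1)
          - (d.-1)%:Z * (radial_quot k * radial k) - radial_quot k.+2 * radial k.+2).
    by rewrite /green !branchS (radialS (ltnW lt_kh)) (radialS lt_kh) natz_pred; ring.
  by rewrite !radial_quotK ?natz_pred; [ring | lia..].
have -> : d%:Z * green k.+1 k.+1 - green k k - (d.-1)%:Z * green k.+1 k.+2
    = radial k * (radial_quot k.+1 * radial k.+1)
      - (d.-1)%:Z * radial k.+1 * (radial_quot k * radial k).
  rewrite /green branchS -eq_kt (radialS (ltnW lt_kh)) (radialS lt_kh) natz_pred.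
  by ring.
by rewrite !radial_quotK ?(radialS (ltnW lt_kh)); [ring | lia..].
Qed.

End Radial.

Section GreenVector.
Variables d h M : nat.
Hypothesis d_gt2 : (2 < d)%N.
Hypothesis theta_dvdM : forall a, (0 < a <= h.+1)%N -> (theta d a %| M)%N.
Hypothesis root_dvdM : (d * d.-1 ^ h * theta d h.+1 %| M)%N.
Variable v : vert d h.

Let pv := vpath v.
Let t := size pv.

Let t_le_h : (t <= h)%N.
Proof. by case/andP: (vpathP v). Qed.

Let g := green d h M t.

Definition green_at (s : seq 'I_d) : int := g (lcp s pv) (size s).

Lemma sum_spine_child s (X : int) : (size s < h)%N ->
  \sum_(i : 'I_d) (if is_vpath h (rcons s i)
                     && [&& lcp s pv == size s, (size s < t)%N & i == nth i pv (size s)]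
                   then X else 0)
  = if (lcp s pv == size s) && (size s < t)%N then X else 0.
Proof.
move=> lt_sh; case: (boolP (_ && _)) => [/andP[/eqP on_spine lt_st] | off_spine]; last first.
  rewrite big1 // => i _; case: ifP => // /and4P[_ on_spine lt_st _].
  by case/negP: off_spine; rewrite on_spine.
have z : 'I_d by exists 0%N; lia.
pose i0 := nth z pv (size s).
have child_i0 : rcons s i0 = take (size s).+1 pv.
  by rewrite (take_nth z lt_st) (lcp_prefix on_spine).
have valid_i0 : is_vpath h (rcons s i0).
  by move: (vpathP v); rewrite -/pv -(cat_take_drop (size s).+1 pv) -child_i0 => /is_vpath_catl.
rewrite (bigD1 i0) //= big1 ?addr0 => [|i ne_i].
  by rewrite valid_i0 on_spine eqxx lt_st (set_nth_default z) // eqxx.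
by rewrite (set_nth_default z) // (negbTE ne_i) !andbF.
Qed.

Lemma green_children s : is_vpath h s ->
  \sum_(i : 'I_d) (if is_vpath h (rcons s i) then green_at (rcons s i) else 0)
  = (if s == [::] then d else d.-1)%:Z * g (lcp s pv) (size s).+1
    + (if (lcp s pv == size s) && (size s < t)%N
       then g (size s).+1 (size s).+1 - g (size s) (size s).+1 else 0).
Proof.
move=> vs; case: (ltnP (size s) h) => [lt_sh | ge_sh]; last first.
  have size_s : size s = h by apply/eqP; rewrite eqn_leq ge_sh andbT; case/andP: vs.
  rewrite big1 => [|i _]; last by rewrite is_vpath_rcons ltnNge ge_sh.
  rewrite /g /green size_s radial_leaf !mulr0 add0r.
  by case: ifP => // /andP[_]; rewrite ltnNge t_le_h.
rewrite -(sum_children_const _ lt_sh vs) -sum_spine_child // -big_split /=.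
apply: eq_bigr => i _; rewrite /green_at lcp_rcons size_rcons.
case: ifP => valid_i /=; last by rewrite addr0.
case: ifP => [/and3P[/eqP on_spine _ _] | _]; last by rewrite addr0.
by rewrite on_spine addrC subrK.
Qed.

Lemma green_atP w :
  \sum_u green_at (vpath u) * Delta u w = if w == v then M%:Z else 0.
Proof.
rewrite sum_Delta sum_adj sum_children green_children ?vpathP //.
have -> : (w == v) = (vpath w == pv) by apply/eqP/eqP => [-> | /vpath_inj].
have := vpathP w; case/lastP eq_w: (vpath w) => [|p i] valid_w.
  rewrite sum_parent_root // add0r /= eq_sym -size_eq0 -/t.
  by rewrite -(green_spine_root d_gt2 theta_dvdM root_dvdM t_le_h); ring.
rewrite (sum_parent _ eq_w) /green_at [rcons p i == pv]eq_lcp -size_eq0.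
rewrite !lcp_rcons !size_rcons; case: ifP => [/and3P[/eqP on_spine lt_pt _] | _].
  rewrite on_spine !eqxx.
  by rewrite -(green_spine d_gt2 theta_dvdM root_dvdM t_le_h (n := (size p).+1)) //=; ring.
have depth_w : (0 < (size p).+1 <= h)%N by case/andP: valid_w; rewrite size_rcons.
rewrite (@ltn_eqF (lcp p pv)) ?ltnS ?lcp_size //= addr0 /g /green.
by rewrite -[RHS](mulr0 (branch d h M t (lcp p pv))) -(radial_harmonic d_gt2 depth_w); ring.
Qed.

End GreenVector.

Lemma theta_dvd_exp_bound d h : (2 < d)%N ->
  forall a, (0 < a <= h.+1)%N -> (theta d a %| exp_bound d h)%N.
Proof.
move=> d_gt2 a /andP[a_gt0 le_ah]; rewrite /exp_bound dvdn_mull //.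
have [lt1a | ge1a] := ltnP 1 a; last by rewrite (_ : a = 1) ?theta1 //; lia.
case: ltngtP le_ah => // [lt_ah | ->] _; last first.
  exact: dvdn_trans (dvdn_mull _ (dvdnn _)) (dvdn_lcml _ _).
apply: dvdn_trans (dvdn_lcmr _ _); rewrite (bigD1_seq a) ?iota_uniq ?dvdn_lcml //.
by rewrite mem_index_iota lt1a.
Qed.

Lemma root_dvd_exp_bound d h : (d * d.-1 ^ h * theta d h.+1 %| exp_bound d h)%N.
Proof. by rewrite /exp_bound (mulnC d) -mulnA dvdn_mul ?dvdn_lcml. Qed.

Lemma exp_bound_gt0 d h : (2 < d)%N -> (0 < exp_bound d h)%N.
Proof.
move=> d_gt2; have d_gt0 : (0 < d)%N by lia.
have d1_gt0 : (0 < d.-1)%N by lia.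
rewrite /exp_bound muln_gt0 expn_gt0 lcmn_gt0 muln_gt0 theta_gt0 // d1_gt0 d_gt0 /=.
rewrite big_seq_cond; elim/big_ind: _ => [// | a b a_gt0 b_gt0 | k /andP[k_in _]].
  by rewrite lcmn_gt0 a_gt0.
by apply: theta_gt0; move: k_in; rewrite mem_index_iota; lia.
Qed.

Theorem proposition7p5 (d h : nat) (hd : (3 <= d)%N) (hh : (1 <= h)%N)
  (e : nat) (he : is_exponent d h e) :
  (e %| exp_bound d h)%N.
Proof.
apply: (exponent_dvdn he (exp_bound_gt0 h hd)).
apply: (in_lattice_scale (c := fun v u => green_at (exp_bound d h) v (vpath u))) => v w.
exact: (green_atP hd (theta_dvd_exp_bound hd) (root_dvd_exp_bound d h)).
Qed.
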